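(* In the setting described in the context, given $\epsilon>0$ there is an integer $N(\epsilon)>0$ such that for every $K^u_\alpha$ curve $\gamma$ in $Q$, $$\rho_\gamma\Big(\gamma\cap\bigcup_{i\ge N(\epsilon)}E_i\Big)<\epsilon.$$
   Context: Let $Q=[0,1]^2$. Fix $0<\alpha<1$, $K^u_\alpha=\{(v_1,v_2):|v_2|\le\alpha|v_1|\}$; a $K^u_\alpha$ curve is a $C^2$ curve with all tangent vectors in $K^u_\alpha$; $\rho_\gamma$ is Riemannian (arc length) measure on $\gamma$. Let $E_1,E_2,\dots$ be a countable collection of closed curvilinear rectangles in $Q$, each bounded above and below by subintervals of $\{y=1\}$, $\{y=0\}$ and on the left and right by graphs $x=x^{(i)}(y)$ of smooth functions with $|dx^{(i)}/dy|\le\alpha$. For $z\in Q$, $\ell_z$ is the horizontal line through $z$, $\delta_z(E)=\operatorname{diam}(\ell_z\cap E)$, $\delta_{i,\max}=\max_{z\in Q}\delta_z(E_i)$, $\delta_{i,\min}=\min_{z\in Q}\delta_z(E_i)$. Assume (G1) $\operatorname{int}E_i\cap\operatorname{int}E_j=\emptyset$ for $i\ne j$; (G2) $Q\setminus\bigcup_i\operatorname{int}E_i$ has Lebesgue measure $0$; (G3) $-\sum_i\delta_{i,\max}\log\delta_{i,\min}<\infty$. (In the paper these posts are the domains of $C^2$ diffeomorphisms $f_i$ satisfying further hyperbolicity and distortion conditions, which are not needed to state this result.) *)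

From HB Require Import structures.
From mathcomp Require Import all_boot all_order all_algebra.
From mathcomp Require Import all_classical all_reals all_analysis.
Set Implicit Arguments.
Unset Strict Implicit.
Unset Printing Implicit Defensive.
Import Order.TTheory GRing.Theory Num.Theory.
Import numFieldNormedType.Exports.
Local Open Scope classical_set_scope.
Local Open Scope ring_scope.

Section Defs.
Variable R : realType.

Definition Qsq : set (R * R) := [set p | 0 <= p.1 <= 1 /\ 0 <= p.2 <= 1].

Definition d1 (f : R -> R) : R -> R := @derive1 R R f.

Definition smooth (f : R -> R) : Prop :=
  forall (n : nat) (t : R), derivable (iter n d1 f) t 1.

Definition C2_on (s0 s1 : R) (f : R -> R) : Prop :=
  forall t, s0 < t < s1 ->
    [/\ derivable f t 1, derivable (d1 f) t 1 & {for t, continuous (d1 (d1 f))}].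

Definition curvrect (a b : R -> R) : set (R * R) :=
  [set p | 0 <= p.2 <= 1 /\ a p.2 <= p.1 <= b p.2].

Definition rect_sides (alpha : R) (a b : R -> R) : Prop :=
  [/\ smooth a, smooth b,
      (forall y, 0 <= y <= 1 -> `|d1 a y| <= alpha /\ `|d1 b y| <= alpha)
    & (forall y, 0 <= y <= 1 -> 0 <= a y /\ a y < b y /\ b y <= 1)].

Definition dist2 (p q : R * R) : R :=
  Num.sqrt ((p.1 - q.1) ^+ 2 + (p.2 - q.2) ^+ 2).
Definition diam2 (S : set (R * R)) : R :=
  sup [set dist2 pq.1 pq.2 | pq in S `*` S].

Definition hline (z : R * R) : set (R * R) := [set p | p.2 = z.2].

Definition delta (z : R * R) (E : set (R * R)) : R := diam2 (hline z `&` E).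
Definition delta_max (E : set (R * R)) : R := sup [set delta z E | z in Qsq].
Definition delta_min (E : set (R * R)) : R := inf [set delta z E | z in Qsq].

Definition Kcone (alpha : R) (v : R * R) : Prop := `|v.2| <= alpha * `|v.1|.

Definition Ku_curve (alpha s0 s1 : R) (gx gy : R -> R) : Prop :=
  [/\ s0 < s1, C2_on s0 s1 gx, C2_on s0 s1 gy &
      forall t, s0 < t < s1 ->
        [/\ Qsq (gx t, gy t),
            (d1 gx t, d1 gy t) != 0 &
            Kcone alpha (d1 gx t, d1 gy t)]].

Definition arc_measure (s0 s1 : R) (gx gy : R -> R) (A : set (R * R)) : \bar R :=
  (\int[@lebesgue_measure R]_(t in `]s0, s1[ `&` [set t | A (gx t, gy t)])
     (Num.sqrt (d1 gx t ^+ 2 + d1 gy t ^+ 2))%:E)%E.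

End Defs.

From HB Require Import structures.
From mathcomp Require Import all_boot all_order all_algebra.
From mathcomp Require Import all_classical all_reals all_analysis.
From mathcomp Require Import ring lra measurable_realfun.
Import Order.TTheory GRing.Theory Num.Theory.
Import numFieldNormedType.Exports.
Local Open Scope classical_set_scope.
Local Open Scope ring_scope.
Set Implicit Arguments.
Unset Strict Implicit.
Unset Printing Implicit Defensive.

(* A K^u_alpha curve is a graph over the x-axis with slope at most alpha, and
   the sides of each rectangle E_i have slope at most alpha with respect to y.
   Hence two points of the curve lying in E_i have x-coordinates at most
   delta_max(E_i) / (1 - alpha^2) apart, and since the speed is at most twice
   |x'|, the curve has length at most 2 delta_max(E_i) / (1 - alpha^2) inside
   E_i. Two rectangles with delta_min >= 2/3 would both contain (1/2, 1/2) in
   their interiors, so all but finitely many E_i have -ln delta_min(E_i) >=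
   ln(3/2); for them the length bound is a constant times the i-th term of the
   series (G3), and countable subadditivity reduces the claim to the smallness
   of the tails of that convergent series. *)

Section real_facts.
Context {R : realType}.
Implicit Types (f F dF : R -> R) (x : R).

Lemma norm1_mulr_le (e x : R) : `|e| = 1 -> e * x <= `|x|.
Proof. by move=> e1; rewrite (le_trans (ler_norm _)) // normrM e1 mul1r. Qed.

Lemma norm1_mulr_gt0 (e x : R) : `|e| = 1 -> 0 < e * x -> e * x = `|x|.
Proof. by move=> e1 ex0; rewrite -(gtr0_norm ex0) normrM e1 mul1r. Qed.

Lemma derivable1_continuous f x : derivable f x 1 -> {for x, continuous f}.
Proof. by move/derivable1_diffP/differentiable_continuous. Qed.

Lemma is_derive_ge0_homo F dF s0 s1 :
  {in `]s0, s1[, forall x, is_derive x 1 F (dF x)} ->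
  {in `]s0, s1[, forall x, 0 <= dF x} ->
  {in `]s0, s1[ &, {homo F : x y / x <= y}}.
Proof.
move=> dFE dF0; apply: ger0_derive1_le_oo.
- by move=> x /dFE dFx; exact: ex_derive.
- by move=> x xI; have dFx := dFE x xI; rewrite derive1E derive_val dF0.
- by move=> x /set_mem/dFE dFx; apply: derivable1_continuous; exact: ex_derive.
Qed.

Lemma derive1_bound_lipschitz f (k c d p q : R) :
  {in `[c, d], forall x, derivable f x 1} ->
  {in `[c, d], forall x, `|derive1 f x| <= k} ->
  p \in `[c, d] -> q \in `[c, d] -> `|f q - f p| <= k * `|q - p|.
Proof.
move=> df dfk; wlog pq : p q / p <= q => [hw pI qI|pI qI].
  by case: (leP p q) => [|/ltW] ?; [|rewrite distrC (distrC q)]; exact: hw.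
have sub : `[p, q] `<=` `[c, d].
  by apply: subset_itv; rewrite bnd_simp; [move: pI|move: qI];
    rewrite in_itv /= => /andP[].
have dfpq x : x \in `]p, q[ -> is_derive x 1 f (derive1 f x).
  by move=> /subset_itv_oo_cc/sub xI; rewrite derive1E; exact/derivableP/df.
have cfpq : {within `[p, q], continuous f}.
  apply: continuous_in_subspaceT => x /set_mem/sub xI.
  exact/derivable1_continuous/df.
have [x /sub xI ->] := MVT_segment pq dfpq cfpq.
by rewrite normrM ler_wpM2r // dfk.
Qed.

Lemma continuous_neq0_sign f s0 s1 x0 : x0 \in `]s0, s1[ ->
  {in `]s0, s1[, continuous f} -> {in `]s0, s1[, forall x, f x != 0} ->
  {in `]s0, s1[, forall x, 0 < Num.sg (f x0) * f x}.
Proof.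
move=> x0I fc fn x xI; pose g := fun y => Num.sg (f x0) * f y.
have gc : {in `]s0, s1[, continuous g}.
  move=> y yI; apply: (@continuousM _ _ (cst (Num.sg (f x0))) f).
    exact: cst_continuous.
  exact: fc.
have gn : {in `]s0, s1[, forall y, g y != 0}.
  by move=> y yI; rewrite /g mulf_neq0 ?sgr_eq0 ?fn.
have gx0 : 0 < g x0 by rewrite /g -normrEsg normr_gt0 fn.
have no_root c d : c \in `]s0, s1[ -> d \in `]s0, s1[ -> c <= d ->
    Num.min (g c) (g d) <= 0 <= Num.max (g c) (g d) -> False.
  move=> cI dI cd; have cdI : {subset `[c, d] <= `]s0, s1[}.
    move=> y; move: cI dI; rewrite !in_itv /= => /andP[s0c _] /andP[_ ds1].
    by move=> /andP[cy yd]; rewrite (lt_le_trans s0c cy) (le_lt_trans yd ds1).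
  case/(IVT cd); first by apply: continuous_in_subspaceT => y /set_mem/cdI/gc.
  by move=> y /cdI yI /eqP; apply/negP/gn.
rewrite ltNge; apply/negP => gx.
case: (leP x0 x) => [x0x|/ltW xx0].
- by apply: (no_root x0 x); rewrite // ge_min le_max gx (ltW gx0) orbT.
- by apply: (no_root x x0); rewrite // ge_min le_max gx (ltW gx0) orbT.
Qed.

End real_facts.

Section real_integral.
Context {R : realType}.
Local Notation mu := (@lebesgue_measure R).

Lemma open_itv_continuous_measurable (f : R -> R) (s0 s1 : R) :
  {in `]s0, s1[, continuous f} -> measurable_fun `]s0, s1[%classic (EFin \o f).
Proof.
move=> fc; apply/measurable_EFinP.
by apply: open_continuous_measurable_fun; [exact: itv_open | move=> x /set_mem/fc].
Qed.

Lemma measurable_itv_ge0 (f : R -> R) (s0 s1 : R) :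
  {in `]s0, s1[, continuous f} ->
  measurable (`]s0, s1[ `&` [set t | 0 <= f t]).
Proof.
move=> fc; have mf : measurable_fun `]s0, s1[ f.
  by apply: open_continuous_measurable_fun; [exact: itv_open|move=> x /set_mem/fc].
rewrite (_ : [set t | 0 <= f t] = f @^-1` `[0, +oo[).
  exact: mf (measurable_itv _) _ (measurable_itv _).
by apply/seteqP; split => t /=; rewrite in_itv /= andbT.
Qed.

Lemma inf_sup_increment_le (T : set R) (G : R -> R) (c : R) :
  T !=set0 -> has_lbound T -> has_ubound T ->
  {for inf T, continuous G} -> {for sup T, continuous G} ->
  (forall t v, T t -> T v -> G v - G t <= c) ->
  G (sup T) - G (inf T) <= c.
Proof.
move=> T0 lbT ubT Gm GM TG; apply/ler_addgt0Pr => e e0.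
have e2 : 0 < e / 2 by rewrite divr_gt0.
have near_G x : {for x, continuous G} ->
    exists2 d, 0 < d & forall y, `|x - y| < d -> `|G x - G y| < e / 2.
  by move=> /cvgrPdist_lt/(_ _ e2)/nbhs_ballP[d d0 xd]; exists d.
have [dm dm0 Gmd] := near_G _ Gm.
have [dM dM0 GMd] := near_G _ GM.
have [t Tt tm] := inf_adherent dm0 (conj T0 lbT).
have [v Tv vM] := sup_adherent dM0 (conj T0 ubT).
have /Gmd : `|inf T - t| < dm.
  by rewrite distrC ger0_norm ?subr_ge0 ?ge_inf // ltrBlDl.
have /GMd : `|sup T - v| < dM.
  by rewrite ger0_norm ?subr_ge0 ?ub_le_sup // ltrBlDl -ltrBlDr.
rewrite !ltr_norml => /andP[_ GMv] /andP[Gmt _].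
have := TG t v Tt Tv; lra.
Qed.

Section integral_le_increment.
Variables (s0 s1 c : R) (G g : R -> R) (S : set R).
Hypothesis G'g : {in `]s0, s1[, forall x : R, is_derive x 1 G (g x)}.
Hypothesis gc : {in `]s0, s1[, continuous g}.
Hypothesis g0 : {in `]s0, s1[, forall x, 0 <= g x}.
Hypothesis mS : measurable (`]s0, s1[ `&` S).
Hypothesis c0 : 0 <= c.
Hypothesis GS : forall t v, (`]s0, s1[ `&` S) t -> (`]s0, s1[ `&` S) v ->
  G v - G t <= c.

Let Gc (x : R) : x \in `]s0, s1[ -> {for x, continuous G}.
Proof. by move=> /G'g G'x; apply: derivable1_continuous; exact: ex_derive. Qed.

Lemma segment_integral_le_increment u w : s0 < u -> w < s1 ->
  (\int[mu]_(x in (`]s0, s1[ `&` S) `&` `[u, w]) (g x)%:E <= c%:E)%E.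
Proof.
move=> s0u ws1; set T := _ `&` _.
have mT : measurable T by apply: measurableI => //; exact: measurable_itv.
have [->|/set0P T0] := eqVneq T set0; first by rewrite integral_set0 lee_fin.
have Tuw : T `<=` `[u, w] by move=> x [].
have lbT : has_lbound T by exists u => x /Tuw; rewrite /= in_itv => /andP[].
have ubT : has_ubound T by exists w => x /Tuw; rewrite /= in_itv => /andP[].
have um : u <= inf T by apply: lb_le_inf => // x /Tuw; rewrite /= in_itv => /andP[].
have Mw : sup T <= w by apply: ge_sup => // x /Tuw; rewrite /= in_itv => /andP[].
have TmM : T `<=` `[inf T, sup T].
  by move=> x Tx; rewrite /= in_itv /= ge_inf ?ub_le_sup.
have mMI : {subset `[inf T, sup T] <= `]s0, s1[}.
  move=> x; rewrite !in_itv /= => /andP[mx xM].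
  by rewrite (lt_le_trans s0u (le_trans um mx)) (le_lt_trans (le_trans xM Mw)).
have mM : inf T <= sup T.
  by case: T0 => x Tx; rewrite (le_trans (ge_inf lbT Tx) (ub_le_sup ubT Tx)).
have mI : inf T \in `]s0, s1[ by apply: mMI; rewrite in_itv /= lexx mM.
have MI : sup T \in `]s0, s1[ by apply: mMI; rewrite in_itv /= lexx mM.
have mgmM : measurable_fun `[inf T, sup T] (EFin \o g).
  apply: measurable_funS (measurable_itv _) _ (open_itv_continuous_measurable gc).
  by move=> x /mMI.
apply: (@le_trans _ _ (\int[mu]_(x in `[inf T, sup T]) (g x)%:E)%E).
  apply: ge0_subset_integral => //.
  by move=> x /mMI/g0; rewrite lee_fin.
move: mM; rewrite le_eqVlt => /predU1P[<-|mM].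
  by rewrite set_itv1 integral_set1 lee_fin.
rewrite (@continuous_FTC2 _ g G _ _ mM).
- rewrite -EFinD lee_fin; apply: inf_sup_increment_le => //; [exact: Gc|exact: Gc|].
  by move=> t v [ISt _] [ISv _]; exact: GS.
- by apply: continuous_in_subspaceT => x /set_mem/mMI/gc.
- split; [|exact: cvg_at_right_filter (Gc mI)|exact: cvg_at_left_filter (Gc MI)].
  by move=> x /subset_itv_oo_cc/mMI/G'g G'x; exact: ex_derive.
- by move=> x /subset_itv_oo_cc/mMI/G'g G'x; rewrite derive1E derive_val.
Qed.

(* [g] need not be integrable up to [s0] and [s1]: the fundamental theorem of
   calculus is applied on the segments [[s0 + 1/(n+1), s1 - 1/(n+1)]] and the
   bound passes to their union by monotone convergence. *)
Lemma integral_le_increment :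
  (\int[mu]_(x in `]s0, s1[ `&` S) (g x)%:E <= c%:E)%E.
Proof.
pose F n := (`]s0, s1[ `&` S) `&` `[s0 + n.+1%:R^-1, s1 - n.+1%:R^-1].
have ndF : {homo F : n m / (n <= m)%N >-> (n <= m)%O}.
  move=> n m nm; rewrite subsetEset => x [ISx]; rewrite /= !in_itv /=.
  have : m.+1%:R^-1 <= n.+1%:R^-1 :> R by rewrite lef_pV2 ?posrE ?ltr0n // ler_nat.
  move=> mn /andP[nx xn]; split => //.
  by rewrite /= in_itv /= (le_trans _ nx) ?lerD2l // (le_trans xn) // lerD2l lerN2.
have mF n : measurable (F n) by apply: measurableI => //; exact: measurable_itv.
have mgF n : measurable_fun (F n) (EFin \o g).
  by apply: measurable_funS (open_itv_continuous_measurable gc) => // x [[]].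
have g0F n x : F n x -> (0 <= (EFin \o g) x)%E.
  by move=> [[/g0 gx0 _] _]; rewrite lee_fin.
have -> : `]s0, s1[ `&` S = \bigcup_n F n.
  apply/seteqP; split=> [x ISx|x [n _ [] //]].
  have /andP[s0x xs1] : s0 < x < s1 by case: ISx; rewrite /= in_itv.
  have [n] : exists n, 0 + n.+1%:R^-1 < Num.min (x - s0) (s1 - x) :> R.
    by apply: ltr_add_invr; rewrite lt_min !subr_gt0 s0x xs1.
  rewrite add0r lt_min => /andP[ns0 ns1]; exists n => //; split => //.
  rewrite /= in_itv /=; move: (n.+1%:R^-1) ns0 ns1 => e ns0 ns1.
  by apply/andP; split; lra.
have FS := ge0_nondecreasing_set_cvg_integral (mu := mu) ndF mF mgF g0F.
rewrite -(cvg_lim _ FS) //; apply: lime_le; first exact: cvgP FS.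
by apply: nearW => n; apply: segment_integral_le_increment;
  rewrite ?ltrDl ?ltrBlDr ?ltrDl invr_gt0 ltr0n.
Qed.

End integral_le_increment.

End real_integral.

Section integral_bigcup_le.
Context d (T : measurableType d) (R : realType) (mu : {measure set T -> \bar R}).
Local Open Scope ereal_scope.

Lemma ge0_integral_bigcup_le (D : set T) (F : nat -> set T) (P : pred nat)
    (f : T -> \bar R) :
  measurable D -> (forall k, measurable (D `&` F k)) -> measurable_fun D f ->
  (forall x, D x -> 0 <= f x) ->
  \int[mu]_(x in D `&` \bigcup_(k in [set k | P k]) F k) f x <=
  \sum_(k <oo | P k) \int[mu]_(x in D `&` F k) f x.
Proof.
move=> mD mF mf f0.
pose E k := if P k then D `&` F k else set0.
have mE k : measurable (E k) by rewrite /E; case: (P k).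
have ED k : E k `<=` D by rewrite /E; case: (P k) => // x [].
have mDU k : measurable (seqDU E k).
  by apply: measurableD => //; exact: bigsetU_measurable.
have -> : D `&` \bigcup_(k in [set k | P k]) F k = \bigcup_k seqDU E k.
  rewrite -seqDU_bigcup_eq; apply/seteqP; split=> [x [Dx [k Pk Fx]]|x [k _]].
    by exists k => //; rewrite /E Pk.
  by rewrite /E; case: ifP => // Pk [Dx Fx]; split => //; exists k.
rewrite ge0_integral_bigcup //; last 2 first.
- by apply: measurable_funS mf => // x [k _ [/ED]].
- by move=> x [k _ [/ED/f0]].
rewrite [X in _ <= X]eseries_mkcond; apply: lee_nneseries => [k _ _|k _].
  by apply: integral_ge0 => x [/ED/f0].
rewrite /E; case: ifP => Pk; last by rewrite /seqDU /E Pk set0D integral_set0.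
apply: ge0_subset_integral => //.
- by apply: measurable_funS mf => // x [].
- by move=> x [/f0].
- by move=> x []; rewrite /E Pk.
Qed.

End integral_bigcup_le.

Lemma dist2_hline {R : realType} (p q : R * R) :
  p.2 = q.2 -> dist2 p q = `|p.1 - q.1|.
Proof. by move=> pq; rewrite /dist2 pq subrr expr0n /= addr0 sqrtr_sqr. Qed.

Section curvilinear_rectangle.
Context {R : realType}.
Variables (alpha : R) (a b : R -> R).
Hypothesis ab : rect_sides alpha a b.

Let E := curvrect a b.

Lemma rect_sides_bounds y : 0 <= y <= 1 -> [/\ 0 <= a y, a y < b y & b y <= 1].
Proof. by case: ab => _ _ _ /(_ y) + y01 => /(_ y01) [? []]. Qed.

Lemma rect_sides_alpha_ge0 : 0 <= alpha.
Proof.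
case: ab => _ _ dab _; have h0 : 0 <= (0 : R) <= 1 by rewrite lexx ler01.
by have [+ _] := dab 0 h0; apply: le_trans.
Qed.

Lemma rect_sides_lipschitz p q : 0 <= p <= 1 -> 0 <= q <= 1 ->
  `|a q - a p| <= alpha * `|q - p| /\ `|b q - b p| <= alpha * `|q - p|.
Proof.
case: ab => sa sb dab _ p01 q01.
have pI : p \in `[0, 1] by rewrite in_itv.
have qI : q \in `[0, 1] by rewrite in_itv.
split; apply: derive1_bound_lipschitz pI qI => [x _|x].
- exact: (sa 0%N).
- by rewrite in_itv => /dab [].
- exact: (sb 0%N).
- by rewrite in_itv => /dab [].
Qed.

Lemma delta_curvrect z : 0 <= z.2 <= 1 -> delta z E = b z.2 - a z.2.
Proof.
move=> z01; have [a0 ab_lt b1] := rect_sides_bounds z01.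
rewrite /delta /diam2; set D := [set _ | _ in _].
have D_ub : ubound D (b z.2 - a z.2).
  move=> _ [[p q] [[/= pz [_ /andP[ap pb]]] [/= qz [_ /andP[aq qb]]]] <-].
  rewrite dist2_hline /=; last by rewrite pz qz.
  rewrite pz in ap pb; rewrite qz in aq qb.
  by rewrite ler_norml; apply/andP; split; lra.
have D_ab : D (b z.2 - a z.2).
  exists ((b z.2, z.2), (a z.2, z.2)).
    by split; split => //; split => //=; rewrite lexx ltW.
  by rewrite dist2_hline //= gtr0_norm // subr_gt0.
by apply/le_anti; rewrite ge_sup ?ub_le_sup //; exists (b z.2 - a z.2).
Qed.

Let delta_set_ub : ubound [set delta z E | z in @Qsq R] 1.
Proof.
move=> _ [z [_ z01] <-]; rewrite delta_curvrect //.
by have [a0 _ b1] := rect_sides_bounds z01; lra.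
Qed.

Let delta_set_lb : lbound [set delta z E | z in @Qsq R] 0.
Proof.
move=> _ [z [_ z01] <-]; rewrite delta_curvrect //.
by have [_ ab_lt _] := rect_sides_bounds z01; rewrite subr_ge0 ltW.
Qed.

Let delta_set_width y : 0 <= y <= 1 ->
  [set delta z E | z in @Qsq R] (b y - a y).
Proof.
by move=> y01; exists (0, y); [split; rewrite //= lexx ler01|rewrite delta_curvrect].
Qed.

Lemma width_le_delta_max y : 0 <= y <= 1 -> b y - a y <= delta_max E.
Proof. by move=> y01; apply: ub_le_sup; [exists 1|exact: delta_set_width]. Qed.

Lemma delta_min_le_width y : 0 <= y <= 1 -> delta_min E <= b y - a y.
Proof. by move=> y01; apply: ge_inf; [exists 0|exact: delta_set_width]. Qed.

Let in01_0 : 0 <= (0 : R) <= 1. Proof. by rewrite lexx ler01. Qed.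

Lemma delta_max_ge0 : 0 <= delta_max E.
Proof.
apply: le_trans (width_le_delta_max in01_0).
by have [_ ab_lt _] := rect_sides_bounds in01_0; rewrite subr_ge0 ltW.
Qed.

Lemma delta_min_le1 : delta_min E <= 1.
Proof.
apply: le_trans (delta_min_le_width in01_0) _.
by have [a0 _ b1] := rect_sides_bounds in01_0; lra.
Qed.

Lemma delta_min_gt0 : 0 < delta_min E.
Proof.
have [sa sb _ _] := ab.
have cw : {within `[0, 1], continuous (b \- a)}.
  apply: continuous_in_subspaceT => y _.
  by apply: continuousB; apply: derivable1_continuous;
    [exact: (sb 0%N)|exact: (sa 0%N)].
have [c] := EVT_min ler01 cw; rewrite in_itv /= => c01 cmin.
apply: lt_le_trans (_ : 0 < b c - a c) _.
  by have [_ ab_lt _] := rect_sides_bounds c01; rewrite subr_gt0.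
apply: lb_le_inf; first by exists (b 0 - a 0); exact: delta_set_width.
by move=> _ [z [_ z01] <-]; rewrite delta_curvrect //; apply: cmin; rewrite in_itv.
Qed.

Lemma curvrect_interior_mid : alpha <= 1 -> 2 / 3 <= delta_min E ->
  E^° (1 / 2, 1 / 2).
Proof.
move=> al1 dmin; have mid01 : 0 <= (1 / 2 : R) <= 1 by apply/andP; split; lra.
have [amid _ bmid] := rect_sides_bounds mid01.
have wmid := le_trans dmin (delta_min_le_width mid01).
have e0 : 0 < 1 / 12 :> R by lra.
rewrite /interior; have := nbhsx_ballx (1 / 2 : R, 1 / 2 : R) _ e0.
apply: filterS => -[x y] [/= xb yb].
move: xb yb; rewrite -!ball_normE /= !ltr_norml => /andP[x1 x2] /andP[y1 y2].
have y01 : 0 <= y <= 1 by apply/andP; split; lra.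
have [/ler_normlP[_ la] /ler_normlP[lb _]] := rect_sides_lipschitz mid01 y01.
have : alpha * `|y - 1 / 2| <= 1 / 12.
  rewrite distrC; apply: (@le_trans _ _ (1 * `|1 / 2 - y|)).
    by rewrite ler_wpM2r.
  by rewrite mul1r ltW // ltr_norml; apply/andP; split; lra.
by move=> ay; split => //=; apply/andP; split; lra.
Qed.

Lemma curvrect_cone_width p q : E p -> E q ->
  `|q.2 - p.2| <= alpha * `|q.1 - p.1| ->
  (1 - alpha ^+ 2) * `|q.1 - p.1| <= delta_max E.
Proof.
have al0 := rect_sides_alpha_ge0.
have half p' q' : E p' -> E q' -> `|q'.2 - p'.2| <= alpha * `|q'.1 - p'.1| ->
    q'.1 - p'.1 <= delta_max E + alpha ^+ 2 * `|q'.1 - p'.1|.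
  move=> [p01 /andP[ap _]] [q01 /andP[_ qb]] cone.
  have [/(le_trans (ler_norm _)) la _] := rect_sides_lipschitz p01 q01.
  have := width_le_delta_max q01.
  have : alpha * `|q'.2 - p'.2| <= alpha ^+ 2 * `|q'.1 - p'.1|.
    by rewrite expr2 -mulrA ler_wpM2l.
  lra.
move=> Ep Eq cone; rewrite mulrBl mul1r lerBlDr.
rewrite ler_norml (half p q) // andbT lerNl opprB.
by rewrite distrC (distrC q.1) in cone *; exact: half.
Qed.

End curvilinear_rectangle.

Section Ku_curve.
Context {R : realType}.
Variables (alpha s0 s1 : R) (gx gy : R -> R).
Hypothesis hK : Ku_curve alpha s0 s1 gx gy.
Implicit Types t v : R.

Let I := `]s0, s1[.

Let Ku_I t : t \in I -> s0 < t < s1. Proof. by rewrite in_itv. Qed.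

Let gx_derivable : {in I, forall t, derivable gx t 1}.
Proof. by case: hK => _ + _ _ t /Ku_I => /[apply] -[]. Qed.

Let gy_derivable : {in I, forall t, derivable gy t 1}.
Proof. by case: hK => _ _ + _ t /Ku_I => /[apply] -[]. Qed.

Let gx_is_derive : {in I, forall t, is_derive t 1 gx (d1 gx t)}.
Proof. by move=> t /gx_derivable/derivableP; rewrite /d1 derive1E. Qed.

Let gy_is_derive : {in I, forall t, is_derive t 1 gy (d1 gy t)}.
Proof. by move=> t /gy_derivable/derivableP; rewrite /d1 derive1E. Qed.

Let d1gx_continuous : {in I, continuous (d1 gx)}.
Proof.
by case: hK => _ + _ _ t /Ku_I => /[apply] -[_ /derivable1_continuous].
Qed.

Let d1gy_continuous : {in I, continuous (d1 gy)}.
Proof.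
by case: hK => _ _ + _ t /Ku_I => /[apply] -[_ /derivable1_continuous].
Qed.

Let Ku_Qsq : {in I, forall t, Qsq (gx t, gy t)}.
Proof. by case: hK => _ _ _ + t /Ku_I => /[apply] -[]. Qed.

Let Ku_cone : {in I, forall t, `|d1 gy t| <= alpha * `|d1 gx t|}.
Proof. by case: hK => _ _ _ + t /Ku_I => /[apply] -[]. Qed.

Let d1gx_neq0 : {in I, forall t, d1 gx t != 0}.
Proof.
move=> t tI; apply/negP => /eqP gx0.
case: hK => _ _ _ /(_ t (Ku_I tI)) [_ + /=]; rewrite /Kcone /= gx0 normr0 mulr0.
by rewrite normr_le0 => + /eqP gy0; rewrite gy0 eqxx.
Qed.

Lemma Ku_curve_sign :
  exists2 sg : R, `|sg| = 1 & {in I, forall t, 0 < sg * d1 gx t}.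
Proof.
have [s01 _ _ _] := hK.
have midI : (s0 + s1) / 2 \in I by rewrite in_itv /=; apply/andP; split; lra.
exists (Num.sg (d1 gx ((s0 + s1) / 2))); first by rewrite normr_sg d1gx_neq0.
exact: continuous_neq0_sign.
Qed.

Lemma Ku_curve_lipschitz : 0 <= alpha ->
  {in I &, forall t v, `|gy v - gy t| <= alpha * `|gx v - gx t|}.
Proof.
move=> al0; have [sg sg1 sgx] := Ku_curve_sign.
suff tv_le t v : t \in I -> v \in I -> t <= v ->
    `|gy v - gy t| <= alpha * (sg * (gx v - gx t)).
  have sgW x : alpha * (sg * x) <= alpha * `|x|.
    by apply: ler_wpM2l => //; exact: norm1_mulr_le.
  move=> t v tI vI; have [tv|/ltW vt] := leP t v.
    exact: le_trans (tv_le _ _ tI vI tv) (sgW _).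
  by rewrite distrC (distrC (gx v)); exact: le_trans (tv_le _ _ vI tI vt) (sgW _).
move=> tI vI tv; rewrite ler_norml.
have cone_dir e : `|e| <= 1 -> e * (gy v - gy t) <= alpha * (sg * (gx v - gx t)).
  move=> e1; pose F := alpha \*: (sg \*: gx) - e \*: gy.
  have F' x : x \in I -> is_derive x 1 F (alpha * (sg * d1 gx x) - e * d1 gy x).
    move=> xI; apply: is_deriveB; apply: is_deriveZ; last exact: gy_is_derive.
    by apply: is_deriveZ; exact: gx_is_derive.
  have F'0 x : x \in I -> 0 <= alpha * (sg * d1 gx x) - e * d1 gy x.
    move=> xI; rewrite subr_ge0 (norm1_mulr_gt0 sg1 (sgx x xI)).
    apply: le_trans (ler_norm _) _; rewrite normrM (le_trans _ (Ku_cone xI)) //.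
    by rewrite ler_piMl.
  have : alpha * (sg * gx t) - e * gy t <= alpha * (sg * gx v) - e * gy v.
    by have := is_derive_ge0_homo F' F'0 tI vI tv; rewrite /F !fctE.
  lra.
have lo : - (gy v - gy t) <= alpha * (sg * (gx v - gx t)).
  by rewrite -mulN1r cone_dir // normrN normr1.
have hi : gy v - gy t <= alpha * (sg * (gx v - gx t)).
  by rewrite -[X in X <= _]mul1r cone_dir // normr1.
by rewrite lerNl lo hi.
Qed.

Lemma measurable_Ku_curve_curvrect a b : smooth a -> smooth b ->
  measurable (`]s0, s1[ `&` [set t | curvrect a b (gx t, gy t)]).
Proof.
move=> sa sb.
have gxc : {in I, continuous gx} by move=> t /gx_derivable/derivable1_continuous.
have side_c f : smooth f -> {in I, continuous (f \o gy)}.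
  move=> sf t /gy_derivable/derivable1_continuous gyc.
  exact/continuous_comp/derivable1_continuous/(sf 0%N).
have ma := measurable_itv_ge0 (f := gx - (a \o gy))
  (fun t tI => continuousB (gxc t tI) (side_c a sa t tI)).
have mb := measurable_itv_ge0 (f := (b \o gy) - gx)
  (fun t tI => continuousB (side_c b sb t tI) (gxc t tI)).
rewrite (_ : _ `&` _ = (`]s0, s1[ `&` [set t | 0 <= (gx - (a \o gy)) t]) `&`
                       (`]s0, s1[ `&` [set t | 0 <= ((b \o gy) - gx) t])).
  exact: measurableI.
apply/seteqP; split => t /=; rewrite !fctE.
  by move=> [tI [_ /andP[ag gb]]]; rewrite !subr_ge0.
move=> [[tI ag] [_ gb]]; split => //; split; first exact: (Ku_Qsq tI).2.
by move: ag gb; rewrite !subr_ge0 => -> ->.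
Qed.

Let speed t := Num.sqrt (d1 gx t ^+ 2 + d1 gy t ^+ 2).

Let speed_continuous : {in I, continuous speed}.
Proof.
move=> t tI; apply: continuous_comp; last exact: sqrt_continuous.
have dgx := d1gx_continuous tI; have dgy := d1gy_continuous tI.
by apply: continuousD; apply: continuousM.
Qed.

Let speed_le t : alpha <= 1 -> t \in I -> speed t <= 2 * `|d1 gx t|.
Proof.
move=> al1 tI; have gygx : `|d1 gy t| <= `|d1 gx t|.
  by apply: le_trans (Ku_cone tI) _; rewrite ler_piMl.
rewrite /speed -[X in _ <= X]ger0_norm ?mulr_ge0 // -sqrtr_sqr ler_wsqrtr //.
rewrite -(real_normK (num_real (d1 gx t))) -(real_normK (num_real (d1 gy t))).
by have := normr_ge0 (d1 gy t); nra.
Qed.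

Lemma arc_measure_curvrect_le a b : alpha < 1 -> rect_sides alpha a b ->
  (arc_measure s0 s1 gx gy (curvrect a b) <=
     (2 * delta_max (curvrect a b) / (1 - alpha ^+ 2))%:E)%E.
Proof.
move=> al1 ab; have al0 := rect_sides_alpha_ge0 ab; have [sa sb _ _] := ab.
have a2 : 0 < 1 - alpha ^+ 2 by nra.
have [sg sg1 sgx] := Ku_curve_sign.
have sg_abs : {in I, forall t, sg * d1 gx t = `|d1 gx t|}.
  by move=> t /sgx; exact: norm1_mulr_gt0.
pose g t := 2 * sg * d1 gx t.
have gc : {in I, continuous g}.
  move=> t tI; apply: (@continuousM _ _ (cst (2 * sg)) (d1 gx)).
    exact: cst_continuous.
  exact: d1gx_continuous.
pose S := [set t | curvrect a b (gx t, gy t)].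
have mIS : measurable (`]s0, s1[ `&` S) := measurable_Ku_curve_curvrect sa sb.
have IS_I : `]s0, s1[ `&` S `<=` `]s0, s1[ by move=> t [].
rewrite /arc_measure -/S.
apply: (@le_trans _ _ (\int[lebesgue_measure]_(t in `]s0, s1[ `&` S) (g t)%:E)%E).
  apply: ge0_le_integral => //.
  - exact: measurable_funS (measurable_itv _) IS_I
      (open_itv_continuous_measurable speed_continuous).
  - exact: measurable_funS (measurable_itv _) IS_I
      (open_itv_continuous_measurable gc).
  - move=> t [tI _]; rewrite lee_fin /g -mulrA sg_abs //.
    exact: speed_le (ltW al1) tI.
apply: (integral_le_increment (G := (2 * sg) \*: gx)) => //.
- by move=> t tI; exact: is_deriveZ (gx_is_derive tI).
- by move=> t tI; rewrite /g -mulrA sg_abs // mulr_ge0.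
- by rewrite divr_ge0 ?mulr_ge0 ?(delta_max_ge0 ab) ?ltW.
move=> t v [tI Et] [vI Ev]; rewrite /= -mulrBr ler_pdivlMr //.
have /= width := curvrect_cone_width ab Et Ev (Ku_curve_lipschitz al0 tI vI).
have := norm1_mulr_le (gx v - gx t) sg1; have := normr_ge0 (gx v - gx t).
nra.
Qed.

Lemma arc_measure_bigcup_le (P : pred nat) (a b : nat -> R -> R) :
  (forall i, smooth (a i)) -> (forall i, smooth (b i)) ->
  (arc_measure s0 s1 gx gy (\bigcup_(i in [set i | P i]) curvrect (a i) (b i)) <=
   \sum_(i <oo | P i) arc_measure s0 s1 gx gy (curvrect (a i) (b i)))%E.
Proof.
move=> sa sb; apply: ge0_integral_bigcup_le => //.
- by move=> i; exact: measurable_Ku_curve_curvrect.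
exact: open_itv_continuous_measurable speed_continuous.
Qed.

End Ku_curve.

Definition log_weight {R : realType} (E : set (R * R)) : R :=
  - (delta_max E * ln (delta_min E)).

Section log_weight.
Context {R : realType}.
Variables (alpha : R) (a b : R -> R).
Hypothesis ab : rect_sides alpha a b.

Lemma log_weight_ge0 : 0 <= log_weight (curvrect a b).
Proof.
rewrite /log_weight oppr_ge0 mulr_ge0_le0 ?(delta_max_ge0 ab) //.
exact/ln_le0/(delta_min_le1 ab).
Qed.

Lemma delta_max_le_log_weight : delta_min (curvrect a b) < 2 / 3 ->
  delta_max (curvrect a b) * ln (3 / 2) <= log_weight (curvrect a b).
Proof.
move=> dmin; have dmin0 := delta_min_gt0 ab.
rewrite /log_weight -mulrN ler_wpM2l ?(delta_max_ge0 ab) //.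
rewrite -lnV ?posrE // ler_ln ?posrE ?invr_gt0 //.
rewrite -[3 / 2]invf_div lef_pV2 ?posrE ?ltW //; lra.
Qed.

End log_weight.

Lemma nneseries_tail_lt {R : realType} (u : nat -> R) (e : R) : 0 < e ->
  (forall i, 0 <= u i) -> (\sum_(0 <= i <oo) (u i)%:E < +oo)%E ->
  exists N1, forall N, (N1 <= N)%N ->
    (\sum_(i <oo | (N <= i)%N) (u i)%:E < e%:E)%E.
Proof.
move=> e0 u0 fin_u.
have e_nbhs : nbhs (0 : \bar R) [set y | (y < e%:E)%E].
  by apply: open_nbhs_nbhs; split; [exact: open_ereal_lt_ereal|rewrite /= lte_fin].
have [N1 _ tail_lt] := nneseries_tail_cvg fin_u (fun i _ => u0 i) e_nbhs.
by exists N1 => N /tail_lt; rewrite /= eseries_cond.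
Qed.

Section rectangle_family.
Context {R : realType}.
Variables (alpha : R) (a b : nat -> R -> R).
Hypothesis al : 0 < alpha < 1.
Hypothesis ab : forall i, rect_sides alpha (a i) (b i).
Hypothesis G1 : forall i j, i <> j ->
  (curvrect (a i) (b i))° `&` (curvrect (a j) (b j))° = set0.

Let E i := curvrect (a i) (b i).

Let a_smooth i : smooth (a i). Proof. by case: (ab i). Qed.
Let b_smooth i : smooth (b i). Proof. by case: (ab i). Qed.

Lemma delta_min_lt_eventually :
  exists N, forall i, (N <= i)%N -> delta_min (E i) < 2 / 3.
Proof.
have mid i : 2 / 3 <= delta_min (E i) -> (E i)° (1 / 2, 1 / 2).
  by apply: curvrect_interior_mid; case/andP: al => _ /ltW.
have [[k dk]|none] := pselect (exists k, 2 / 3 <= delta_min (E k)).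
  exists k.+1 => i ki; rewrite ltNge; apply/negP => di.
  have : ((E k)° `&` (E i)°) (1 / 2, 1 / 2) by split; apply: mid.
  by rewrite G1 // => ik; rewrite ik ltnn in ki.
by exists 0%N => i _; rewrite ltNge; apply/negP => di; apply: none; exists i.
Qed.

Lemma arc_measure_tail_le N s0 s1 gx gy :
  (forall i, (N <= i)%N -> delta_min (E i) < 2 / 3) ->
  Ku_curve alpha s0 s1 gx gy ->
  (arc_measure s0 s1 gx gy (\bigcup_(i in [set i | (N <= i)%N]) E i) <=
   (2 / ((1 - alpha ^+ 2) * ln (3 / 2)))%:E *
     \sum_(i <oo | (N <= i)%N) (log_weight (E i))%:E)%E.
Proof.
move=> dmin hK; have /andP[al0 al1] := al.
have a2 : 0 < 1 - alpha ^+ 2 by nra.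
have ln32 : 0 < ln (3 / 2 : R) by rewrite ln_gt0 //; lra.
set C := 2 / _; have C0 : 0 <= C by rewrite divr_ge0 // mulr_ge0 // ltW.
apply: le_trans (arc_measure_bigcup_le hK _ a_smooth b_smooth) _.
rewrite -nneseriesZl; last by move=> i _; rewrite lee_fin (log_weight_ge0 (ab i)).
apply: lee_nneseries => i.
  by move=> _ _; apply: integral_ge0 => t _; rewrite lee_fin sqrtr_ge0.
move=> /= Ni; apply: le_trans (arc_measure_curvrect_le hK al1 (ab i)) _.
have -> : 2 * delta_max (E i) / (1 - alpha ^+ 2) = C * (delta_max (E i) * ln (3 / 2)).
  by rewrite /C; field; rewrite !gt_eqF.
by rewrite -EFinM lee_fin ler_wpM2l // (delta_max_le_log_weight (ab i)) // dmin.
Qed.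

End rectangle_family.

Theorem lemma10p5 (R : realType) (alpha : R) (a b : nat -> R -> R) :
  0 < alpha < 1 ->
  (forall i, rect_sides alpha (a i) (b i)) ->
  (* (G1) interiors pairwise disjoint *)
  (forall i j, i <> j ->
     (curvrect (a i) (b i))° `&` (curvrect (a j) (b j))° = set0) ->
  (* (G2) Q minus the union of interiors is Lebesgue-null *)
  ((@lebesgue_measure R) \x (@lebesgue_measure R))%E.-negligible
     (@Qsq R `\` \bigcup_i (curvrect (a i) (b i))°) ->
  (* (G3) *)
  (\sum_(0 <= i <oo)
     (- (delta_max (curvrect (a i) (b i)) *
         ln (delta_min (curvrect (a i) (b i)))))%:E < +oo)%E ->
  forall eps : R, 0 < eps ->
  exists N : nat, (0 < N)%N /\
    forall (s0 s1 : R) (gx gy : R -> R),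
      Ku_curve alpha s0 s1 gx gy ->
      (arc_measure s0 s1 gx gy
         (\bigcup_(i in [set i | (N <= i)%N]) curvrect (a i) (b i)) < eps%:E)%E.
Proof.
move=> al ab G1 _ G3 eps eps0; have /andP[al0 al1] := al.
have [N0 dmin] := delta_min_lt_eventually al ab G1.
set C := 2 / ((1 - alpha ^+ 2) * ln (3 / 2)).
have C0 : 0 < C by rewrite divr_gt0 ?mulr_gt0 ?ln_gt0 //; [nra|lra].
have [N1 tail_lt] :=
  nneseries_tail_lt (divr_gt0 eps0 C0) (fun i => log_weight_ge0 (ab i)) G3.
exists (maxn 1 (maxn N0 N1)); split=> [|s0 s1 gx gy hK]; first by rewrite leq_max.
apply: le_lt_trans (arc_measure_tail_le al ab _ hK) _.
  by move=> i Ni; apply: dmin; apply: leq_trans Ni; rewrite !leq_max leqnn orbT.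
have -> : eps%:E = (C%:E * (eps / C)%:E)%E by rewrite -EFinM mulrC divfK ?gt_eqF.
by rewrite lte_pmul2l ?lte_fin //; apply: tail_lt; rewrite !leq_max leqnn !orbT.
Qed.
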